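(* For every $n\ge 2$, the Bigalke–Rollenske nilmanifold $X^{4n-2}$ admits balanced metrics.
   Context: Fix $n\ge2$. Let $G_n\subset GL(2n+2,\mathbb C)$ be the real nilpotent Lie group of upper triangular unipotent matrices parametrized by $x_1,\dots,x_{n-1},y_1,\dots,y_n,z_1,\dots,z_{n-1},w_1,\dots,w_n\in\mathbb C$ of the following shape (rows/columns indexed $1,\dots,2n+2$): row $1$ has entry $\bar y_1$ in column $2n+1$ and $w_1$ in column $2n+2$; for $k=2,\dots,n$, row $k$ has $\bar z_{k-1}$ in column $n+k-1$, $-x_{k-1}$ in column $n+k$ and $w_k$ in column $2n+2$; for $k=1,\dots,n$, row $n+k$ has $y_k$ in column $2n+2$; row $2n+1$ has $z_1$ in column $2n+2$; all other off-diagonal entries are $0$ and the diagonal entries are $1$. Let $\Gamma$ be the lattice of such matrices with entries in $\mathbb Z[i]$, and $X^{4n-2}=\Gamma\backslash G_n$, a compact complex manifold of complex dimension $4n-2$ with the left-invariant complex structure whose $(1,0)$-forms are spanned by the left-invariant co-frame $dx_j\,(1\le j\le n-1)$, $dy_j\,(1\le j\le n)$, $dz_j\,(1\le j\le n-1)$, $\omega_1=dw_1-\bar y_1dz_1$, $\omega_k=dw_k-\bar z_{k-1}dy_{k-1}+x_{k-1}dy_k$ $(k=2,\dots,n)$. These satisfy $d(dx_j)=d(dy_j)=d(dz_j)=0$, $\partial\omega_1=0$, $\bar\partial\omega_1=dz_1\wedge d\bar y_1$, and for $j=2,\dots,n$: $\partial\omega_j=dx_{j-1}\wedge dy_j$,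 $\bar\partial\omega_j=dy_{j-1}\wedge d\bar z_{j-1}$. A balanced metric on a complex manifold of complex dimension $N$ is a Hermitian metric whose fundamental form $\omega$ satisfies $d\omega^{N-1}=0$. *)

(* Left-invariant complex differential forms on the
   Bigalke--Rollenske nilmanifold, modelled as the exterior algebra over a
   numeric closed field C on the 2N generators
     phi_0 .. phi_(N-1)        (the (1,0) co-frame)
     phi_N .. phi_(2N-1)       (their conjugates: phi_(k+N) = conj phi_k)
   with N = 4n-2 and the (1,0) co-frame ordered as
     dx_1..dx_(n-1), dy_1..dy_n, dz_1..dz_(n-1), omega_1..omega_n. *)
From HB Require Import structures.
From mathcomp Require Import all_boot all_order all_algebra.
Set Implicit Arguments. Unset Strict Implicit. Unset Printing Implicit Defensive.
Import Order.TTheory GRing.Theory Num.Theory.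
Local Open Scope ring_scope.

Section Forms.
Variable C : numClosedFieldType.
Variable M : nat. (* number of real-rank generators, = 2N *)

(* a form: coefficient of e_S = e_(s1) /\ ... /\ e_(sk), s1 < ... < sk *)
Definition form := {ffun {set 'I_M} -> C}.

(* sign of e_A /\ e_B = sgn A B * e_(A u B) for disjoint A, B *)
Definition wsgn (A B : {set 'I_M}) : C :=
  (-1) ^+ #|[set p : 'I_M * 'I_M | [&& p.1 \in A, p.2 \in B & (p.2 < p.1)%N]]|.

Definition wedge (a b : form) : form :=
  [ffun S : {set 'I_M} => \sum_(A : {set 'I_M} | A \subset S)
               wsgn A (S :\: A) * a A * b (S :\: A)].

Definition form1 : form := [ffun S : {set 'I_M} => (S == set0)%:R].

(* the generator e_k (zero if k >= M) *)
Definition gen (k : nat) : form :=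
  [ffun S : {set 'I_M} => (if (insub k : option 'I_M) is Some i
             then (S == [set i])%:R else 0) : C].

Definition mono (s : seq nat) : form := foldr (fun a acc => wedge (gen a) acc) form1 s.

(* the exterior derivative, given its values on the generators,
   extended as an antiderivation *)
Fixpoint dmono (dg : nat -> form) (s : seq nat) : form :=
  match s with
  | [::] => 0
  | a :: t => wedge (dg a) (mono t) - wedge (gen a) (dmono dg t)
  end.

Definition fscale (c : C) (a : form) : form := [ffun S : {set 'I_M} => c * a S].

Definition dform (dg : nat -> form) (a : form) : form :=
  \sum_(S : {set 'I_M}) fscale (a S) (dmono dg (map val (enum S))).

Definition wpow (a : form) (k : nat) : form := iter k (wedge a) form1.

End Forms.

(* complex dimension of X^{4n-2} *)
Definition cdim (n : nat) : nat := (4 * n - 2)%N.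

Definition iX (n j : nat) : nat := j.-1.            (* dx_j,   1 <= j <= n-1 *)
Definition iY (n j : nat) : nat := (n - 2 + j)%N.       (* dy_j,   1 <= j <= n   *)
Definition iZ (n j : nat) : nat := (2 * n - 2 + j)%N.   (* dz_j,   1 <= j <= n-1 *)
Definition iW (n j : nat) : nat := (3 * n - 3 + j)%N.   (* omega_j, 1 <= j <= n  *)

Definition dgen (C : numClosedFieldType) (n : nat) (k : nat) : form C (2 * cdim n) :=
  let N := cdim n in
  let g := @gen C (2 * N) in
  let w := @wedge C (2 * N) in
  if (k < 3 * n - 2)%N then 0
  else if (k < N)%N then
    (let j := (k - (3 * n - 3))%N in
     if j == 1%N then w (g (iZ n 1)) (g (iY n 1 + N)%N)
     else w (g (iX n j.-1)) (g (iY n j)) + w (g (iY n j.-1)) (g (iZ n j.-1 + N)%N))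
  else if (k < N + (3 * n - 2))%N then 0
  else if (k < 2 * N)%N then
    (let j := (k - N - (3 * n - 3))%N in
     if j == 1%N then w (g (iZ n 1 + N)%N) (g (iY n 1))
     else w (g (iX n j.-1 + N)%N) (g (iY n j + N)%N) + w (g (iY n j.-1 + N)%N) (g (iZ n j.-1)))
  else 0.

Definition d_X (C : numClosedFieldType) (n : nat) : form C (2 * cdim n) -> form C (2 * cdim n) :=
  dform (@dgen C n).

Definition hermitian_pd (C : numClosedFieldType) (N : nat) (h : 'M[C]_N) : Prop :=
  (forall j k, h j k = (h k j)^*) /\
  (forall v : 'rV[C]_N, v != 0 ->
     0 < \sum_(j < N) \sum_(k < N) (v 0 j)^* * h j k * v 0 k).

(* fundamental form  omega = i * sum_{j,k} h_{jk} phi_j /\ conj(phi_k) *)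
Definition fund (C : numClosedFieldType) (n : nat) (h : 'M[C]_(cdim n)) : form C (2 * cdim n) :=
  \sum_(j < cdim n) \sum_(k < cdim n)
     fscale ('i * h j k) (wedge (@gen C (2 * cdim n) j) (@gen C (2 * cdim n) (k + cdim n)%N)).

Definition balanced (C : numClosedFieldType) (n : nat) (h : 'M[C]_(cdim n)) : Prop :=
  @d_X C n (wpow (@fund C n h) (cdim n).-1) = 0.

(* Any diagonal metric works, e.g. the standard one w = i sum_k phi_k /\ conj phi_k.
   Its (N-1)-st power is a combination of the monomials prod_(j <> k) phi_j /\ conj phi_j,
   each of which misses exactly one conjugate pair {phi_k, conj phi_k}.  Differentiating
   such a monomial replaces one factor phi_a by d phi_a, and by the structure equations
   d phi_a is a sum of products phi_x /\ phi_y with x, y <> a and {x, y} never a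
   conjugate pair.  Such a product survives the wedge with the remaining factors only
   if {x, y} is the missing pair, which is impossible; hence d(w^(N-1)) = 0. *)

From Pilot Require Import Defs.
From HB Require Import structures.
From mathcomp Require Import all_boot all_order all_algebra zify.
Import Order.TTheory GRing.Theory Num.Theory.
Local Open Scope ring_scope.

Section Support.
Context {C : numClosedFieldType} {M : nat}.
Implicit Types (a b : Defs.form C M) (P Q : {set 'I_M} -> Prop).

Definition supported a P := forall S, a S != 0 -> P S.

Lemma supportedW {a P Q} : supported a P -> (forall S, P S -> Q S) -> supported a Q.
Proof. by move=> Pa PQ S /Pa /PQ. Qed.

Lemma supported0 P : supported 0 P.
Proof. by move=> S; rewrite ffunE eqxx. Qed.

Lemma supportedD {a b P} : supported a P -> supported b P -> supported (a + b) P.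
Proof.
move=> Pa Pb S; rewrite ffunE.
by have [->|/Pa//] := eqVneq (a S) 0; rewrite add0r => /Pb.
Qed.

Lemma supportedN {a P} : supported a P -> supported (- a) P.
Proof. by move=> Pa S; rewrite ffunE oppr_eq0 => /Pa. Qed.

Lemma supportedB {a b P} : supported a P -> supported b P -> supported (a - b) P.
Proof. by move=> Pa /supportedN; apply: supportedD. Qed.

Lemma supported_sum I (r : seq I) (F : I -> Defs.form C M) P :
  (forall i, supported (F i) P) -> supported (\sum_(i <- r) F i) P.
Proof.
move=> PF; apply: (big_ind (supported^~ P)) => // [|a b].
  exact: supported0.
exact: supportedD.
Qed.

Lemma supportedZ c {a P} : supported a P -> supported (fscale c a) P.
Proof. by move=> Pa S; rewrite ffunE mulf_eq0 negb_or => /andP[_ /Pa]. Qed.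

Lemma supported_wedge {a b P Q} : supported a P -> supported b Q ->
  supported (wedge a b)
    (fun S => exists2 A : {set 'I_M}, A \subset S & P A /\ Q (S :\: A)).
Proof.
move=> Pa Qb S; rewrite ffunE.
case: (pickP [pred A : {set 'I_M} |
  (A \subset S) && (wsgn _ A (S :\: A) * a A * b (S :\: A) != 0)]).
  move=> A /andP[sAS]; rewrite !mulf_eq0 !negb_or => /andP[/andP[_ aA] bSA] _.
  by exists A => //; split; [apply: Pa | apply: Qb].
move=> noA; case/eqP; apply: big1 => A sAS.
by have /= := noA A; rewrite sAS => /negbFE/eqP.
Qed.

Lemma supported_form1 : supported (form1 C M) (eq^~ set0).
Proof. by move=> S; rewrite ffunE; case: (S =P set0) => // _; rewrite eqxx. Qed.

Lemma supported_gen k :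
  supported (gen C M k) (fun S => exists2 x : 'I_M, val x = k & S = [set x]).
Proof.
move=> S; rewrite ffunE; case: insubP => [x _ vx | _]; last by rewrite eqxx.
by case: (S =P [set x]) => [-> _ | _]; [exists x | rewrite eqxx].
Qed.

Lemma supported_wedge_gen p q : supported (wedge (gen C M p) (gen C M q))
  (fun S => exists x y : 'I_M, [/\ val x = p, val y = q, x != y & S = [set x; y]]).
Proof.
apply: supportedW (supported_wedge (supported_gen p) (supported_gen q)) _.
move=> S [A sxS [[x <- eA] [y <- eSx]]]; subst A; exists x, y; split=> //.
  by have := set11 y; rewrite -eSx !inE eq_sym => /andP[].
by rewrite -(setD1K (subsetP sxS x (set11 x))) eSx.
Qed.

Lemma supported_mono s :
  supported (mono C M s) (fun S => forall x, (x \in S) = (val x \in s)).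
Proof.
elim: s => [|k s IHs].
  by apply: supportedW (supported_form1) _ => S -> x; rewrite in_set0.
apply: supportedW (supported_wedge (supported_gen k) IHs) _.
move=> S [A sxS [[x <- eA] eS]] z; subst A.
rewrite in_cons -eS !inE (inj_eq val_inj).
by case: (eqVneq z x) => [->|_] //=; rewrite (subsetP sxS _ (set11 x)).
Qed.

Lemma supported_dmono {dg : nat -> Defs.form C M} {P : nat -> {set 'I_M} -> Prop} {s} :
  (forall k, supported (dg k) (P k)) -> uniq s ->
  supported (dmono dg s) (fun S => exists2 k, k \in s & exists2 B, P k B &
    B \subset S /\ forall x, (x \in S :\: B) = (val x \in s) && (val x != k)).
Proof.
move=> Pdg; elim: s => [_|k s IHs /= /andP[ks us]]; first exact: supported0.
apply: supportedB.
  apply: supportedW (supported_wedge (Pdg k) (supported_mono s)) _.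
  move=> S [B sBS [PB eS]]; exists k; first exact: mem_head.
  exists B => //; split=> // z; rewrite eS in_cons.
  by case: (eqVneq (val z) k) => [->|] /=; [rewrite (negbTE ks) | rewrite andbT].
apply: supportedW (supported_wedge (supported_gen k) (IHs us)) _.
move=> S [A sxS [[x vx eA] [j js [B PB [sB eSB]]]]]; subst A.
exists j; first by rewrite in_cons js orbT.
exists B => //; split=> [|z]; first exact: subset_trans sB (subsetDl _ _).
case: (eqVneq z x) => [->|zx].
  have xB : x \notin B by apply: contraTN (set11 x) => /(subsetP sB); rewrite !inE eqxx.
  have jk : k != j by apply: contraNneq ks => ->.
  by rewrite vx mem_head jk !inE xB (subsetP sxS _ (set11 x)).
have := eSB z; rewrite !inE zx /= => ->.
by rewrite -vx (inj_eq val_inj) (negbTE zx).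
Qed.

Lemma dform_eq0 {dg : nat -> Defs.form C M} {a P} : supported a P ->
  (forall S, P S -> dmono dg (map val (enum S)) = 0) -> dform dg a = 0.
Proof.
move=> Pa dP; apply: big1 => S _; apply/ffunP => T; rewrite !ffunE.
have [->|/Pa/dP->] := eqVneq (a S) 0; first by rewrite mul0r.
by rewrite ffunE mulr0.
Qed.

End Support.

Definition conjugate (N i j : nat) := (j == i + N)%N || (i == j + N)%N.

Definition paired N (S : {set 'I_(2 * N)}) :=
  forall x y : 'I_(2 * N), val y = (val x + N)%N -> (x \in S) = (y \in S).

Definition offdiag_pair N (k : nat) (B : {set 'I_(2 * N)}) :=
  exists x y : 'I_(2 * N),
    [/\ B = [set x; y], x != y, val x != k, val y != k & ~~ conjugate N x y].

Section Paired.
Context {N : nat}.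
Implicit Types S P : {set 'I_(2 * N)}.

Lemma pairedC {S} : paired N S -> paired N (~: S).
Proof. by move=> pS x y e; rewrite !inE (pS x y e). Qed.

Lemma paired_card2_conjugate {P x y} : paired N P -> #|P| = 2 ->
  x \in P -> y \in P -> x != y -> conjugate N x y.
Proof.
move=> pP cP xP yP xy.
have eP : P = [set x; y].
  by apply/esym/eqP; rewrite eqEcard cards2 xy cP subUset !sub1set xP yP.
have other z : z \in P -> val z != val x -> val z = val y.
  by rewrite eP !inE => /orP[/eqP->|/eqP->]; rewrite ?eqxx.
rewrite /conjugate; case: (ltnP x N) => hx.
  have hx' : (x + N < 2 * N)%N by lia.
  have nx : (x + N)%N != x by lia.
  have := other (Ordinal hx'); rewrite -(pP x (Ordinal hx') erefl) xP /=.
  by move=> /(_ isT nx) <-; rewrite eqxx.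
have hx' : (x - N < 2 * N)%N by move: (ltn_ord x); lia.
have nx : (x - N)%N != x by move: (ltn_ord x); lia.
have ex : val x = (val (Ordinal hx') + N)%N by rewrite /= subnK.
have := other (Ordinal hx'); rewrite (pP _ x ex) xP /=.
by move=> /(_ isT nx) <-; rewrite subnK // eqxx orbT.
Qed.

Lemma dmono_paired_eq0 {C : numClosedFieldType} {dg : nat -> Defs.form C (2 * N)} {S} :
  (forall k, supported (dg k) (offdiag_pair N k)) ->
  paired N S -> #|S| = (2 * N.-1)%N -> dmono dg (map val (enum S)) = 0.
Proof.
move=> dg_off pS cS; apply/ffunP => T; rewrite [RHS]ffunE; apply/eqP; apply: contraT.
have uS : uniq (map val (enum S)) by rewrite (map_inj_uniq val_inj) enum_uniq.
move=> /(supported_dmono dg_off uS) [k _ [B [x [y [-> xy xk yk nxy]]] [_ eT]]].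
have notS z : z \in [set x; y] -> val z != k -> z \notin S.
  move=> zB zk; have := eT z.
  by rewrite inE zB (mem_map val_inj) mem_enum zk andbT => /esym/negbT.
have N0 : (0 < N)%N by move: (ltn_ord x); lia.
have cSC : #|~: S| = 2 by move: (cardsC S); rewrite card_ord cS; lia.
case/negP: nxy; apply: paired_card2_conjugate (pairedC pS) cSC _ _ xy.
  by rewrite inE notS // !inE eqxx.
by rewrite inE notS // !inE eqxx orbT.
Qed.

Lemma supported_wpow_paired {C : numClosedFieldType} {a : Defs.form C (2 * N)} {m} :
  supported a (fun S => paired N S /\ #|S| = 2) ->
  supported (wpow a m) (fun S => paired N S /\ #|S| = (2 * m)%N).
Proof.
move=> Pa; elim: m => [|m IHm].
  apply: supportedW (supported_form1) _ => S ->.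
  by split=> [x y _|]; rewrite ?in_set0 ?cards0.
apply: supportedW (supported_wedge Pa IHm) _ => S [A sAS [[pA cA] [pSA cSA]]].
split=> [x y e|].
  by rewrite -(setID S A) (setIidPr sAS) !in_setU (pA x y e) (pSA x y e).
move: cSA (subset_leq_card sAS); rewrite cardsDS // cA; lia.
Qed.

Lemma supported_wedge_gen_offdiag (C : numClosedFieldType) k p q :
  p != k -> q != k -> ~~ conjugate N p q ->
  supported (wedge (gen C (2 * N) p) (gen C (2 * N) q)) (offdiag_pair N k).
Proof.
move=> pk qk pq; apply: supportedW (supported_wedge_gen p q) _.
by move=> S [x [y [vx vy xy ->]]]; subst p q; exists x, y.
Qed.

End Paired.

Lemma supported_fund_diag {C : numClosedFieldType} {n} {h : 'M[C]_(cdim n)} :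
  is_diag_mx h -> supported (fund h) (fun S => paired (cdim n) S /\ #|S| = 2).
Proof.
move=> /is_diag_mxP hdiag; apply: supported_sum => j; apply: supported_sum => k.
have [ejk|njk] := eqVneq (val j) (val k); last first.
  by move=> S; rewrite ffunE hdiag // mulr0 mul0r eqxx.
rewrite -(val_inj ejk); apply: supportedZ.
apply: supportedW (supported_wedge_gen j (j + cdim n)) _.
move=> S [x [y [vx vy xy ->]]]; split; last by rewrite cards2 xy.
move=> [a ha] [b hb] /= e; rewrite !inE -!val_eqE /= e vx vy.
by move: hb (ltn_ord j); rewrite e /cdim; lia.
Qed.

Lemma supported_dgen (C : numClosedFieldType) n k : (2 <= n)%N ->
  supported (dgen C n k) (offdiag_pair (cdim n) k).
Proof.
move=> hn; rewrite /dgen /cdim; cbv zeta.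
repeat case: ifP => ?; try exact: supported0; try apply: supportedD;
  apply: supported_wedge_gen_offdiag; rewrite /conjugate /iX /iY /iZ; lia.
Qed.

Lemma balanced_diag (C : numClosedFieldType) n (h : 'M[C]_(cdim n)) :
  (2 <= n)%N -> is_diag_mx h -> balanced h.
Proof.
move=> hn hdiag; rewrite /balanced /d_X.
apply: (dform_eq0 (supported_wpow_paired (supported_fund_diag hdiag))).
by move=> S [pS cS]; apply: dmono_paired_eq0 pS cS => k; apply: supported_dgen.
Qed.

Lemma hermitian_pd1 (C : numClosedFieldType) N : hermitian_pd (1%:M : 'M[C]_N).
Proof.
split=> [j k|v hv]; first by rewrite !mxE conjC_nat eq_sym.
have -> : \sum_(j < N) \sum_(k < N) (v 0 j)^* * (1%:M : 'M[C]_N) j k * v 0 k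
    = \sum_(j < N) `|v 0 j| ^+ 2.
  apply: eq_bigr => j _; rewrite (bigD1 j) //= mxE eqxx mulr1 big1 ?addr0.
    by rewrite normCK mulrC.
  by move=> k /negbTE kj; rewrite mxE eq_sym kj mulr0 mul0r.
have sq_ge0 (j : 'I_N) : true -> 0 <= `|v 0 j| ^+ 2 by rewrite exprn_ge0.
rewrite lt0r sumr_ge0 ?andbT //; apply: contra hv => /eqP/(psumr_eq0P sq_ge0) v0.
apply/eqP/rowP => j; rewrite mxE; apply/eqP.
by rewrite -normr_eq0 -sqrf_eq0 v0.
Qed.

Theorem theorem3p3 (n : nat) (hn : (2 <= n)%N) (C : numClosedFieldType) :
  exists h : 'M[C]_(cdim n), hermitian_pd h /\ balanced h.
Proof.
exists 1%:M; split; first exact: hermitian_pd1.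
by apply: balanced_diag hn (scalar_mx_is_diag _ _).
Qed.
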